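(* Let $\gamma>0$, $\gamma\neq1$. Then $N^{\rm alg}_{\mathbb{R}}(r)=c_\gamma\,r/\pi+O(1)$ as $r\to\infty$ for a constant $c_\gamma\le 1+\gamma$, and $c_\gamma=1+\gamma$ if and only if $\gamma$ or $1/\gamma$ is an integer.
   Context: Half-line problem: for $\lambda\neq0$, find $(u,v)$ on $[0,1]$ with $-u''-\lambda^2u=0$, $-v''-\lambda^2\gamma^2v=0$, $u(0)=v(0)=0$, $u(1)=v(1)$, $u'(1)=v'(1)$; $\lambda$ is an ITE if a nontrivial pair exists. ITEs are the nonzero zeros of $F(\lambda)=\gamma\sin\lambda\cos(\gamma\lambda)-\sin(\gamma\lambda)\cos\lambda$; the algebraic multiplicity of an ITE is its order as a zero of $F$. $N^{\rm alg}_{\mathbb{R}}(r)$ is the number of real ITEs in $(0,r]$ counted with algebraic multiplicity. *)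

From Stdlib Require Import Reals Lra Lia List.
Open Scope R_scope.

(* The characteristic function F(lambda) = gamma sin(lambda) cos(gamma lambda)
   - sin(gamma lambda) cos(lambda); ITEs are its nonzero zeros. *)
Definition F_ITE (gamma : R) (lam : R) : R :=
  gamma * sin lam * cos (gamma * lam) - sin (gamma * lam) * cos lam.

Inductive nderiv : nat -> (R -> R) -> (R -> R) -> Prop :=
| nderiv_0 : forall f, nderiv 0 f f
| nderiv_S : forall k f g h,
    nderiv k f g -> (forall x, derivable_pt_lim g x (h x)) -> nderiv (S k) f h.

Definition zero_order (f : R -> R) (x : R) (k : nat) : Prop :=
  (forall j g, (j < k)%nat -> nderiv j f g -> g x = 0) /\
  (exists g, nderiv k f g /\ g x <> 0).

(* ITE_count gamma r n : N^alg_R(r) = n, i.e. the real ITEs in (0, r]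
   are finitely many, listed without repetition by l, and the sum of their
   algebraic multiplicities (orders as zeros of F) is n. *)
Definition ITE_count (gamma r : R) (n : nat) : Prop :=
  exists (l : list R) (ks : list nat),
    NoDup l /\
    (forall x, In x l <-> (0 < x <= r /\ F_ITE gamma x = 0)) /\
    Forall2 (fun x k => zero_order (F_ITE gamma) x k) l ks /\
    n = list_sum ks.

From Stdlib Require Import Reals Lra Lia List ZArith Classical Permutation Wf_nat FunctionalExtensionality.
From Coquelicot Require Import Coquelicot.
Open Scope R_scope.

(* F' = (1 - gamma^2) sin l sin(gamma l), and at a zero of F,
      sin l = 0 iff sin(gamma l) = 0.  Hence a zero is simple unless sin l = 0, in
      which case F' = F'' = 0 <> F''' and the zero is triple.
   2. Distinct zeros.  theta(l) = (gamma - 1) l + atan(u(gamma l)) with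
      u(y) = (1 - gamma) sin y cos y / (gamma cos^2 y + sin^2 y) satisfies
      sin theta(l) = -(positive) F(l), theta' = (gamma^2 - 1) sin^2(gamma l) / (...),
      and |theta(l) - (gamma - 1) l| < PI/2.  After fixing the sign, theta is
      increasing, so the zeros of F in (0, r] are the K = floor(theta(r) / PI)
      crossings of multiples of PI, and K = |gamma - 1| r / PI + O(1).
   3. Triple zeros.  They are the n PI with gamma n integral: the multiples of q PI
      when gamma = p / q in lowest terms, none when gamma is irrational.
   So N(r) = K + 2 J = c r / PI + O(1) with c = |gamma - 1| + 2 / q (or |gamma - 1|);
   as 1 + gamma - c = 2 (min(p, q) - 1) / q, c <= 1 + gamma with equality iff
   p = 1 or q = 1, i.e. iff 1 / gamma or gamma is an integer. *)


Lemma nderiv_unique k f g1 g2 : nderiv k f g1 -> nderiv k f g2 -> g1 = g2.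
Proof.
  revert g1 g2; induction k as [|k IH]; intros g1 g2 h1 h2.
  - inversion h1; inversion h2; subst; reflexivity.
  - inversion h1 as [|? ? g ? hg hd]; inversion h2 as [|? ? g' ? hg' hd']; subst.
    rewrite (IH _ _ hg hg') in hd.
    apply functional_extensionality; intros x.
    exact (uniqueness_limite _ _ _ _ (hd x) (hd' x)).
Qed.

Definition F_ITE1 (gamma x : R) : R :=
  (1 - gamma ^ 2) * (sin x * sin (gamma * x)).
Definition F_ITE2 (gamma x : R) : R :=
  (1 - gamma ^ 2) * (cos x * sin (gamma * x) + gamma * (sin x * cos (gamma * x))).
Definition F_ITE3 (gamma x : R) : R :=
  (1 - gamma ^ 2) *
  (2 * gamma * (cos x * cos (gamma * x)) - (1 + gamma ^ 2) * (sin x * sin (gamma * x))).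

Lemma nderiv_F_ITE gamma :
  nderiv 1 (F_ITE gamma) (F_ITE1 gamma) /\ nderiv 2 (F_ITE gamma) (F_ITE2 gamma) /\
  nderiv 3 (F_ITE gamma) (F_ITE3 gamma).
Proof.
  assert (d1 : nderiv 1 (F_ITE gamma) (F_ITE1 gamma)).
  { econstructor; [constructor|]; intros x; apply is_derive_Reals.
    unfold F_ITE, F_ITE1; auto_derive; [easy|ring]. }
  assert (d2 : nderiv 2 (F_ITE gamma) (F_ITE2 gamma)).
  { econstructor; [exact d1|]; intros x; apply is_derive_Reals.
    unfold F_ITE1, F_ITE2; auto_derive; [easy|ring]. }
  split; [exact d1|split; [exact d2|]].
  econstructor; [exact d2|]; intros x; apply is_derive_Reals.
  unfold F_ITE2, F_ITE3; auto_derive; [easy|ring].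
Qed.

Definition ITE_mult (x : R) : nat := if Req_EM_T (sin x) 0 then 3%nat else 1%nat.

Lemma sin_cos_zero_excl y : sin y = 0 -> cos y <> 0.
Proof. intros hs hc; exact (cos_sin_0 y (conj hc hs)). Qed.

Lemma F_ITE_zero_sin gamma x : 0 < gamma -> F_ITE gamma x = 0 ->
  (sin x = 0 <-> sin (gamma * x) = 0).
Proof.
  intros hg hF; unfold F_ITE in hF; split; intros hs; rewrite hs in hF.
  - pose proof (sin_cos_zero_excl _ hs). apply (Rmult_eq_reg_r (cos x)); lra.
  - pose proof (sin_cos_zero_excl _ hs).
    apply (Rmult_eq_reg_r (gamma * cos (gamma * x))); [|apply Rmult_integral_contrapositive]; lra.
Qed.

Lemma ITE_mult_order gamma x : 0 < gamma -> gamma <> 1 -> F_ITE gamma x = 0 ->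
  zero_order (F_ITE gamma) x (ITE_mult x).
Proof.
  intros hg hne hF.
  destruct (nderiv_F_ITE gamma) as (d1 & d2 & d3).
  assert (hg2 : 1 - gamma ^ 2 <> 0) by (intro; apply hne; nra).
  pose proof (F_ITE_zero_sin gamma x hg hF) as hsin.
  unfold ITE_mult; destruct (Req_EM_T (sin x) 0) as [hs|hs]; split.
  - assert (hsg : sin (gamma * x) = 0) by (apply hsin, hs).
    intros j g hj hd; destruct j as [|[|[|j]]]; try lia.
    + inversion hd; subst; exact hF.
    + rewrite (nderiv_unique _ _ _ _ hd d1); unfold F_ITE1; rewrite hs; ring.
    + rewrite (nderiv_unique _ _ _ _ hd d2); unfold F_ITE2; rewrite hs, hsg; ring.
  - exists (F_ITE3 gamma); split; [exact d3|].
    assert (hsg : sin (gamma * x) = 0) by (apply hsin, hs).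
    pose proof (sin_cos_zero_excl _ hs); pose proof (sin_cos_zero_excl _ hsg).
    unfold F_ITE3; rewrite hs, hsg.
    replace (2 * gamma * (cos x * cos (gamma * x)) - (1 + gamma ^ 2) * (0 * 0))
      with (2 * gamma * cos x * cos (gamma * x)) by ring.
    repeat apply Rmult_integral_contrapositive_currified; lra.
  - intros j g hj hd; assert (j = 0%nat) by lia; subst; inversion hd; subst; exact hF.
  - exists (F_ITE1 gamma); split; [exact d1|].
    assert (hsg : sin (gamma * x) <> 0) by (rewrite <- hsin; exact hs).
    unfold F_ITE1; repeat apply Rmult_integral_contrapositive_currified; assumption.
Qed.

Definition phase_den (gamma y : R) : R := gamma * cos y ^ 2 + sin y ^ 2.
Definition phase_corr (gamma y : R) : R := (1 - gamma) * sin y * cos y / phase_den gamma y.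
Definition theta (gamma l : R) : R := (gamma - 1) * l + atan (phase_corr gamma (gamma * l)).
Definition theta' (gamma l : R) : R :=
  (gamma ^ 2 - 1) * sin (gamma * l) ^ 2 / phase_den (gamma ^ 2) (gamma * l).

(* The denominator is positive since sin and cos never vanish together. *)
Lemma phase_den_pos gamma y : 0 < gamma -> 0 < phase_den gamma y.
Proof.
  intros hg; unfold phase_den; pose proof (sin2_cos2 y) as h; unfold Rsqr in h.
  destruct (Req_dec (sin y) 0) as [hs|hs].
  - rewrite hs in h |- *; nra.
  - assert (0 < sin y ^ 2) by (simpl; rewrite Rmult_1_r; apply Rsqr_pos_lt, hs). nra.
Qed.

Lemma phase_corr_deriv gamma y : 0 < gamma ->
  is_derive (phase_corr gamma) y
    ((1 - gamma) * (gamma * cos y ^ 2 - sin y ^ 2) / phase_den gamma y ^ 2).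
Proof.
  intros hg; pose proof (phase_den_pos gamma y hg) as hd.
  pose proof (sin2_cos2 y) as h1; unfold Rsqr in h1.
  replace (gamma * cos y ^ 2 - sin y ^ 2)
    with ((gamma * cos y ^ 2 - sin y ^ 2) * (sin y * sin y + cos y * cos y)) by (rewrite h1; ring).
  unfold phase_corr, phase_den in *; auto_derive; [lra|field; lra].
Qed.

Lemma one_plus_phase_corr_sq gamma y : 0 < gamma ->
  1 + (phase_corr gamma y)² = phase_den (gamma ^ 2) y / phase_den gamma y ^ 2.
Proof.
  intros hg; pose proof (phase_den_pos gamma y hg) as hd.
  pose proof (sin2_cos2 y) as h1; unfold Rsqr in h1 |- *.
  unfold phase_corr, phase_den in *.
  replace (gamma ^ 2 * cos y ^ 2 + sin y ^ 2)
    with ((gamma ^ 2 * cos y ^ 2 + sin y ^ 2) * (sin y * sin y + cos y * cos y)) by (rewrite h1; ring).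
  field; lra.
Qed.

Lemma theta_deriv gamma l : 0 < gamma -> is_derive (theta gamma) l (theta' gamma l).
Proof.
  intros hg; set (y := gamma * l).
  set (dcorr := (1 - gamma) * (gamma * cos y ^ 2 - sin y ^ 2) / phase_den gamma y ^ 2).
  pose proof (phase_den_pos gamma y hg) as hd.
  pose proof (phase_den_pos (gamma ^ 2) y ltac:(nra)) as hd2.
  assert (hu : is_derive (fun l => phase_corr gamma (gamma * l)) l (gamma * dcorr)).
  { apply (is_derive_comp (phase_corr gamma) (fun l => gamma * l)).
    - apply phase_corr_deriv, hg.
    - auto_derive; [easy|ring]. }
  pose proof (is_derive_comp atan _ l _ _ (is_derive_atan _) hu) as hatan.
  cbv beta in hatan; rewrite one_plus_phase_corr_sq in hatan by exact hg.
  assert (hlin : is_derive (fun l => (gamma - 1) * l) l (gamma - 1))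
    by (auto_derive; [easy|ring]).
  pose proof (is_derive_plus _ _ _ _ _ hlin hatan) as hsum.
  replace (theta' gamma l)
    with (gamma - 1 + gamma * dcorr * / (phase_den (gamma ^ 2) y / phase_den gamma y ^ 2)).
  - exact hsum.
  - unfold theta', dcorr; fold y; unfold phase_den in *; field; lra.
Qed.

Lemma sin_atan y : sin (atan y) = y * cos (atan y).
Proof.
  pose proof (atan_bound y); assert (0 < cos (atan y)) by (apply cos_gt_0; lra).
  rewrite <- (tan_atan y) at 2; unfold tan; field; lra.
Qed.

(* The phase encodes F: sin theta vanishes exactly where F does. *)
Lemma sin_theta gamma l : 0 < gamma ->
  sin (theta gamma l) =
  - cos (atan (phase_corr gamma (gamma * l))) * F_ITE gamma l / phase_den gamma (gamma * l).
Proof.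
  intros hg; pose proof (phase_den_pos gamma (gamma * l) hg) as hd.
  pose proof (sin2_cos2 (gamma * l)) as h1; unfold Rsqr in h1.
  unfold theta; rewrite sin_plus, sin_atan.
  replace ((gamma - 1) * l) with (gamma * l - l) by ring.
  rewrite sin_minus, cos_minus; unfold F_ITE, phase_corr, phase_den in *.
  set (s := sin (gamma * l)) in *; set (c := cos (gamma * l)) in *.
  replace (gamma * sin l * c - s * cos l)
    with (gamma * sin l * c * (s * s + c * c) - s * cos l * (s * s + c * c)) by (rewrite h1; ring).
  field; lra.
Qed.

Lemma nondecreasing_of_deriv (G dG : R -> R) a b :
  (forall x, is_derive G x (dG x)) -> (forall x, 0 <= dG x) -> a <= b -> G a <= G b.
Proof.
  intros hd hp hab; destruct (Req_dec a b) as [<-|hne]; [lra|].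
  destruct (MVT_gen G a b dG) as [c [_ hc]].
  - intros x _; apply hd.
  - intros x _; apply derivable_continuous_pt; exists (dG x); apply is_derive_Reals, hd.
  - specialize (hp c); nra.
Qed.

Lemma increasing_of_deriv (G dG : R -> R) :
  (forall x, is_derive G x (dG x)) -> (forall x, 0 <= dG x) ->
  (forall u v, u < v -> exists w z, u <= w < z /\ z <= v /\ forall x, w < x < z -> 0 < dG x) ->
  forall a b, a < b -> G a < G b.
Proof.
  intros hd hp hs a b hab; destruct (hs a b hab) as (w & z & hw & hz & hpos).
  set (x := w + (z - w) / 3); set (y := w + 2 * (z - w) / 3).
  assert (G x < G y).
  { apply (incr_function G w z dG); simpl; try (unfold x, y; lra).
    - intros t _ _; apply hd.
    - intros t ht1 ht2; apply hpos; simpl in *; lra. }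
  pose proof (nondecreasing_of_deriv G dG a x hd hp ltac:(unfold x; lra)).
  pose proof (nondecreasing_of_deriv G dG y b hd hp ltac:(unfold y; lra)).
  lra.
Qed.

Lemma sin_neq_0_between (y : R) (n : Z) : IZR n * PI < y < (IZR n + 1) * PI -> sin y <> 0.
Proof.
  intros [h1 h2] hs; destruct (sin_eq_0_0 _ hs) as [k ->]; pose proof PI_RGT_0.
  assert (IZR n < IZR k) by (apply (Rmult_lt_reg_r PI); lra).
  assert (IZR k < IZR n + 1) by (apply (Rmult_lt_reg_r PI); lra).
  apply lt_IZR in H0; rewrite <- plus_IZR in H1; apply lt_IZR in H1; lia.
Qed.

Lemma sin_scaled_nonzero_subinterval gamma u v : 0 < gamma -> u < v ->
  exists w z, u <= w < z /\ z <= v /\ forall x, w < x < z -> sin (gamma * x) <> 0.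
Proof.
  intros hg huv; pose proof PI_RGT_0.
  destruct (base_Int_part (gamma * u / PI)) as [h1 h2]; set (m := Int_part _) in *.
  set (z0 := (IZR m + 1) * PI / gamma).
  assert (hu : u < z0).
  { unfold z0; apply (Rmult_lt_reg_l gamma); [lra|].
    replace (gamma * ((IZR m + 1) * PI / gamma)) with ((IZR m + 1) * PI) by (field; lra).
    replace (gamma * u) with (gamma * u / PI * PI) by (field; lra).
    apply Rmult_lt_compat_r; lra. }
  exists u, (Rmin v z0); split; [split; [lra|now apply Rmin_glb_lt]|split; [apply Rmin_l|]].
  intros x [hx1 hx2]; apply (sin_neq_0_between _ m).
  pose proof (Rmin_r v z0); split.
  - replace (IZR m * PI) with (gamma * (IZR m * PI / gamma)) by (field; lra).
    apply Rmult_lt_compat_l; [lra|].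
    apply (Rle_lt_trans _ u); [|lra].
    apply (Rmult_le_reg_l gamma); [lra|].
    replace (gamma * (IZR m * PI / gamma)) with (IZR m * PI) by (field; lra).
    replace (gamma * u) with (gamma * u / PI * PI) by (field; lra).
    apply Rmult_le_compat_r; lra.
  - replace ((IZR m + 1) * PI) with (gamma * z0) by (unfold z0; field; lra).
    apply Rmult_lt_compat_l; lra.
Qed.

(* The phase, normalised by a sign so as to be increasing. *)
Definition phase_sign (gamma : R) : R := if Rlt_dec 1 gamma then 1 else -1.
Definition phase (gamma l : R) : R := phase_sign gamma * theta gamma l.

Lemma phase_sign_spec gamma : 0 < gamma -> gamma <> 1 ->
  phase_sign gamma * (gamma - 1) = Rabs (gamma - 1) /\
  0 < phase_sign gamma * (gamma ^ 2 - 1) /\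
  (phase_sign gamma = 1 \/ phase_sign gamma = -1).
Proof.
  intros hg hne; unfold phase_sign; destruct (Rlt_dec 1 gamma).
  - rewrite Rabs_pos_eq by lra; split; [ring|split; [nra|now left]].
  - rewrite Rabs_left by lra; split; [ring|split; [nra|now right]].
Qed.

Lemma phase_deriv gamma l : 0 < gamma ->
  is_derive (phase gamma) l (phase_sign gamma * theta' gamma l).
Proof. intros hg; apply is_derive_scal, theta_deriv, hg. Qed.

Lemma phase_deriv_sign gamma l : 0 < gamma -> gamma <> 1 ->
  0 <= phase_sign gamma * theta' gamma l /\
  (sin (gamma * l) <> 0 -> 0 < phase_sign gamma * theta' gamma l).
Proof.
  intros hg hne; destruct (phase_sign_spec gamma hg hne) as (_ & hsg & _).
  pose proof (phase_den_pos (gamma ^ 2) (gamma * l) ltac:(nra)) as hd.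
  unfold theta'; set (s := sin (gamma * l)); set (d := phase_den _ _) in *.
  replace (phase_sign gamma * ((gamma ^ 2 - 1) * s ^ 2 / d))
    with (phase_sign gamma * (gamma ^ 2 - 1) * s ^ 2 / d) by (unfold Rdiv; ring).
  split.
  - apply Rdiv_le_0_compat; [apply Rmult_le_pos; [lra|]|]; nra.
  - intros hs; apply Rdiv_lt_0_compat; [apply Rmult_lt_0_compat|]; [lra| |lra].
    simpl; rewrite Rmult_1_r; apply Rsqr_pos_lt, hs.
Qed.

Lemma phase_increasing gamma : 0 < gamma -> gamma <> 1 ->
  forall a b, a < b -> phase gamma a < phase gamma b.
Proof.
  intros hg hne; apply (increasing_of_deriv _ (fun l => phase_sign gamma * theta' gamma l)).
  - intros l; apply phase_deriv, hg.
  - intros l; apply phase_deriv_sign; assumption.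
  - intros u v huv.
    destruct (sin_scaled_nonzero_subinterval gamma u v hg huv) as (w & z & hw & hz & hs).
    exists w, z; split; [exact hw|split; [exact hz|]].
    intros x hx; apply phase_deriv_sign; auto.
Qed.

Lemma phase_continuous gamma : 0 < gamma -> continuity (phase gamma).
Proof.
  intros hg x; apply derivable_continuous_pt.
  exists (phase_sign gamma * theta' gamma x); apply is_derive_Reals, phase_deriv, hg.
Qed.

Lemma phase_at_0 gamma : phase gamma 0 = 0.
Proof.
  unfold phase, theta, phase_corr; rewrite !Rmult_0_r, sin_0.
  unfold Rdiv; rewrite Rmult_0_r, !Rmult_0_l, atan_0; ring.
Qed.

Lemma sin_phase_zero_iff gamma l : 0 < gamma -> gamma <> 1 ->
  (sin (phase gamma l) = 0 <-> F_ITE gamma l = 0).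
Proof.
  intros hg hne; destruct (phase_sign_spec gamma hg hne) as (_ & _ & hsg).
  assert (E : sin (phase gamma l) = phase_sign gamma * sin (theta gamma l)).
  { unfold phase; destruct hsg as [-> | ->]; [now rewrite !Rmult_1_l|].
    replace (-1 * theta gamma l) with (- theta gamma l) by ring; rewrite sin_neg; ring. }
  pose proof (phase_den_pos gamma (gamma * l) hg).
  pose proof (atan_bound (phase_corr gamma (gamma * l))).
  assert (0 < cos (atan (phase_corr gamma (gamma * l)))) by (apply cos_gt_0; lra).
  rewrite E, sin_theta by exact hg; split; intros h.
  - apply Rmult_integral in h; destruct h as [h|h]; [destruct hsg; lra|].
    apply Rmult_integral in h; destruct h as [h|h].
    + apply Rmult_integral in h; destruct h as [h|h]; [lra|exact h].
    + exfalso; apply (Rinv_neq_0_compat (phase_den gamma (gamma * l))); lra.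
  - rewrite h; unfold Rdiv; ring.
Qed.

Lemma phase_near_linear gamma l : 0 < gamma -> gamma <> 1 ->
  Rabs (phase gamma l - Rabs (gamma - 1) * l) < PI / 2.
Proof.
  intros hg hne; destruct (phase_sign_spec gamma hg hne) as (habs & _ & hsg).
  unfold phase, theta; rewrite <- habs.
  pose proof (atan_bound (phase_corr gamma (gamma * l))).
  destruct hsg as [-> | ->]; apply Rabs_def1; lra.
Qed.

Lemma floor_nat (p y : R) : 0 < p -> 0 <= y ->
  exists N : nat, INR N * p <= y < (INR N + 1) * p.
Proof.
  intros hp hy; destruct (base_Int_part (y / p)) as [h1 h2].
  assert (0 <= y / p) by (apply Rdiv_le_0_compat; lra).
  assert (-1 < Int_part (y / p))%Z by (apply lt_IZR; simpl; lra).
  exists (Z.to_nat (Int_part (y / p))); rewrite INR_IZR_INZ, Z2Nat.id by lia.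
  replace y with (y / p * p) at 2 3 by (field; lra).
  split; [apply Rmult_le_compat_r|apply Rmult_lt_compat_r]; lra.
Qed.

Lemma increasing_reflect (G : R -> R) : (forall a b, a < b -> G a < G b) ->
  (forall a b, G a < G b -> a < b) /\ (forall a b, G a = G b -> a = b).
Proof.
  intros hmono; split; intros a b h; destruct (Rtotal_order a b) as [hab|[hab|hab]];
    try (pose proof (hmono _ _ hab)); subst; lra.
Qed.

Lemma multiples_of_PI_reached (G : R -> R) N r :
  continuity G -> G 0 = 0 -> 0 <= r -> INR N * PI <= G r ->
  exists f : nat -> R, forall k, (k <= N)%nat -> 0 <= f k <= r /\ G (f k) = INR k * PI.
Proof.
  intros hc h0 hr hN; pose proof PI_RGT_0.
  assert (hGr : 0 <= G r) by (pose proof (pos_INR N); nra).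
  assert (pre : forall k : nat, {x | 0 <= x <= r /\ G x = Rmin (INR k * PI) (G r)}).
  { intros k; destruct (IVT_gen G 0 r (Rmin (INR k * PI) (G r)) hc) as [x [hx hGx]].
    - rewrite h0, Rmin_left, Rmax_right by lra; split; [|apply Rmin_r].
      apply Rmin_glb; [pose proof (pos_INR k); nra|lra].
    - exists x; rewrite Rmin_left, Rmax_right in hx by lra; split; assumption. }
  exists (fun k => proj1_sig (pre k)); intros k hk.
  destruct (proj2_sig (pre k)) as [hx hGx]; split; [exact hx|].
  rewrite hGx; apply Rmin_left.
  apply (Rle_trans _ (INR N * PI)); [apply Rmult_le_compat_r; [lra|apply le_INR, hk]|lra].
Qed.

Lemma sin_comp_zero_count (G : R -> R) N r :
  continuity G -> (forall a b, a < b -> G a < G b) -> G 0 = 0 -> 0 <= r ->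
  INR N * PI <= G r < (INR N + 1) * PI ->
  exists l, NoDup l /\ length l = N /\ forall x, In x l <-> (0 < x <= r /\ sin (G x) = 0).
Proof.
  intros hc hmono h0 hr [hN1 hN2]; pose proof PI_RGT_0 as hpi.
  destruct (increasing_reflect G hmono) as [hlt hinj].
  destruct (multiples_of_PI_reached G N r hc h0 hr hN1) as [f hf].
  exists (map f (seq 1 N)); split; [|split].
  - apply NoDup_map_NoDup_ForallPairs; [|apply seq_NoDup].
    intros a b ha hb e; apply in_seq in ha; apply in_seq in hb.
    destruct (hf a ltac:(lia)) as [_ ea]; destruct (hf b ltac:(lia)) as [_ eb].
    apply INR_eq, (Rmult_eq_reg_r PI); [|lra]; rewrite <- ea, <- eb, e; reflexivity.
  - now rewrite length_map, length_seq.
  - intros x; rewrite in_map_iff; split.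
    + intros [k [<- hk]]; apply in_seq in hk; destruct (hf k ltac:(lia)) as [hx hGx].
      split; [split; [apply hlt; rewrite h0, hGx|]|]; [|lra|].
      * apply Rmult_lt_0_compat; [apply lt_0_INR; lia|lra].
      * rewrite hGx, INR_IZR_INZ; apply sin_eq_0_1; eexists; reflexivity.
    + intros [[hx1 hx2] hs]; destruct (sin_eq_0_0 _ hs) as [z hz].
      assert (0 < IZR z * PI) by (rewrite <- hz, <- h0; apply hmono, hx1).
      assert (IZR z * PI < (INR N + 1) * PI).
      { rewrite <- hz; destruct hx2 as [hx2| ->]; [pose proof (hmono _ _ hx2)|]; lra. }
      assert (hz1 : (0 < z)%Z) by (apply lt_IZR, (Rmult_lt_reg_r PI); lra).
      assert (hzN : (z < Z.of_nat N + 1)%Z).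
      { apply lt_IZR; rewrite plus_IZR, <- INR_IZR_INZ; apply (Rmult_lt_reg_r PI); lra. }
      exists (Z.to_nat z); split; [|apply in_seq; lia].
      apply hinj; rewrite hz, (proj2 (hf (Z.to_nat z) ltac:(lia))), INR_IZR_INZ, Z2Nat.id by lia.
      reflexivity.
Qed.

Lemma distinct_ITE_count gamma r : 0 < gamma -> gamma <> 1 -> 0 <= r ->
  exists K l, NoDup l /\ length l = K /\
    (forall x, In x l <-> (0 < x <= r /\ F_ITE gamma x = 0)) /\
    Rabs (INR K - Rabs (gamma - 1) * r / PI) <= 2.
Proof.
  intros hg hne hr; pose proof PI_RGT_0 as hpi.
  assert (hpos : 0 <= phase gamma r).
  { rewrite <- (phase_at_0 gamma); destruct hr as [hr| <-]; [|lra].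
    left; apply phase_increasing; assumption. }
  destruct (floor_nat PI (phase gamma r) hpi hpos) as [K hK].
  destruct (sin_comp_zero_count (phase gamma) K r (phase_continuous gamma hg)
              (phase_increasing gamma hg hne) (phase_at_0 gamma) hr hK) as (l & hl & hlen & hin).
  exists K, l; split; [exact hl|split; [exact hlen|split]].
  - intros x; rewrite hin, sin_phase_zero_iff by assumption; reflexivity.
  - pose proof (phase_near_linear gamma r hg hne) as hb; apply Rabs_def2 in hb.
    replace (Rabs (gamma - 1) * r / PI) with (Rabs (gamma - 1) * r * / PI) by reflexivity.
    assert (INR K - Rabs (gamma - 1) * r * / PI
            = (INR K * PI - Rabs (gamma - 1) * r) * / PI) as -> by (field; lra).
    rewrite Rabs_mult, Rabs_inv, (Rabs_pos_eq PI) by lra.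
    apply (Rmult_le_reg_r PI); [lra|]; rewrite Rmult_assoc, Rinv_l, Rmult_1_r by lra.
    apply Rabs_le; lra.
Qed.

Lemma Forall2_map_graph {A B : Type} (P : A -> B -> Prop) (f : A -> B) (l : list A) :
  (forall x, In x l -> P x (f x)) -> Forall2 P l (map f l).
Proof.
  induction l as [|a l IH]; intros h; constructor.
  - apply h; now left.
  - apply IH; intros x hx; apply h; now right.
Qed.

(* N^alg(r) is the number of distinct ITEs in (0, r] plus twice the number of
   those at which sin vanishes (the triple ones). *)
Lemma ITE_count_from_lists gamma r (l s : list R) : 0 < gamma -> gamma <> 1 ->
  NoDup l -> (forall x, In x l <-> (0 < x <= r /\ F_ITE gamma x = 0)) ->
  NoDup s -> (forall x, In x s <-> (0 < x <= r /\ F_ITE gamma x = 0 /\ sin x = 0)) ->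
  ITE_count gamma r (length l + 2 * length s).
Proof.
  intros hg hne hl hin hs hins.
  set (triple x := if Req_EM_T (sin x) 0 then true else false).
  assert (hsum : forall l', list_sum (map ITE_mult l') = (length l' + 2 * length (filter triple l'))%nat).
  { induction l' as [|a l' IH]; [reflexivity|]; simpl; rewrite IH.
    unfold ITE_mult, triple; destruct (Req_EM_T (sin a) 0); simpl; lia. }
  assert (hperm : Permutation (filter triple l) s).
  { apply NoDup_Permutation; [now apply NoDup_filter|exact hs|].
    intros x; rewrite filter_In, hins, hin; unfold triple.
    destruct (Req_EM_T (sin x) 0); intuition congruence. }
  exists l, (map ITE_mult l); split; [exact hl|split; [exact hin|split]].
  - apply Forall2_map_graph; intros x hx.
    apply ITE_mult_order; [exact hg|exact hne|apply hin, hx].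
  - rewrite hsum, (Permutation_length hperm); reflexivity.
Qed.

Definition int_multiple (gamma : R) (n : nat) : Prop := exists z : Z, gamma * INR n = IZR z.

Lemma triple_ITE_iff gamma x : 0 < gamma ->
  (0 < x /\ F_ITE gamma x = 0 /\ sin x = 0) <->
  exists n, (0 < n)%nat /\ x = INR n * PI /\ int_multiple gamma n.
Proof.
  intros hg; pose proof PI_RGT_0; split.
  - intros (hx & hF & hs); destruct (sin_eq_0_0 _ hs) as [k hk].
    assert (hk0 : (0 < k)%Z) by (apply lt_IZR, (Rmult_lt_reg_r PI); lra).
    assert (E : INR (Z.to_nat k) = IZR k) by (rewrite INR_IZR_INZ, Z2Nat.id; [reflexivity|lia]).
    exists (Z.to_nat k); split; [lia|split; [now rewrite E|]].
    apply (F_ITE_zero_sin gamma x hg hF) in hs.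
    destruct (sin_eq_0_0 _ hs) as [z hz]; exists z.
    apply (Rmult_eq_reg_r PI); [|lra]; rewrite E, Rmult_assoc, <- hk; exact hz.
  - intros (n & hn & -> & [z hz]).
    assert (hs : sin (INR n * PI) = 0)
      by (apply sin_eq_0_1; exists (Z.of_nat n); rewrite INR_IZR_INZ; reflexivity).
    assert (0 < INR n) by (apply lt_0_INR, hn).
    split; [apply Rmult_lt_0_compat; lra|split; [|exact hs]].
    assert (hsg : sin (gamma * (INR n * PI)) = 0) by (apply sin_eq_0_1; exists z; rewrite <- hz; ring).
    unfold F_ITE; rewrite hs, hsg; ring.
Qed.

Lemma least_nat (P : nat -> Prop) : (exists n, P n) -> exists m, P m /\ forall k, P k -> (m <= k)%nat.
Proof.
  intros h; destruct (dec_inh_nat_subset_has_unique_least_element P (fun n => classic (P n)) h)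
    as [m [[hm hle] _]]; exists m; split; assumption.
Qed.

Lemma one_plus_sub_abs gamma : 1 + gamma - Rabs (gamma - 1) = 2 * Rmin 1 gamma.
Proof.
  destruct (Rle_dec 1 gamma).
  - rewrite Rabs_pos_eq, Rmin_left by lra; ring.
  - rewrite Rabs_left, Rmin_right by lra; ring.
Qed.

Section RationalGamma.
(* gamma = p / q in lowest terms: q is the least positive n with gamma n integral. *)
Variables (gamma : R) (q : nat).
Hypothesis hg : 0 < gamma.
Hypothesis hq : (0 < q)%nat.
Hypothesis hq_int : int_multiple gamma q.
Hypothesis hq_least : forall k, (0 < k)%nat -> int_multiple gamma k -> (q <= k)%nat.

(* By minimality of q, gamma n is integral exactly for the multiples n of q. *)
Lemma int_multiple_iff_divides n : int_multiple gamma n <-> Nat.divide q n.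
Proof.
  destruct hq_int as [p hp]; split.
  - intros [z hz]; apply Nat.Lcm0.mod_divide.
    destruct (Nat.eq_dec (n mod q) 0) as [|hr]; [assumption|exfalso].
    assert (hmod : int_multiple gamma (n mod q)).
    { exists (z - Z.of_nat (n / q) * p)%Z.
      rewrite minus_IZR, mult_IZR, <- INR_IZR_INZ, <- hz, <- hp.
      replace (INR n) with (INR q * INR (n / q) + INR (n mod q))
        by (rewrite <- mult_INR, <- plus_INR, <- Nat.div_mod_eq; reflexivity).
      ring. }
    pose proof (hq_least (n mod q) ltac:(lia) hmod).
    pose proof (Nat.mod_upper_bound n q ltac:(lia)); lia.
  - intros [j ->]; exists (Z.of_nat j * p)%Z.
    rewrite mult_IZR, <- INR_IZR_INZ, <- hp, mult_INR; ring.
Qed.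

Lemma triple_ITE_count_rational r : 0 <= r ->
  exists J s, NoDup s /\ length s = J /\
    (forall x, In x s <-> (0 < x <= r /\ F_ITE gamma x = 0 /\ sin x = 0)) /\
    Rabs (2 * INR J - 2 / INR q * r / PI) <= 2.
Proof.
  intros hr; pose proof PI_RGT_0 as hpi.
  assert (hqp : 0 < INR q) by (apply lt_0_INR, hq).
  destruct (floor_nat (INR q * PI) r ltac:(nra) hr) as [J [hJ1 hJ2]].
  exists J, (map (fun j => INR (S j * q) * PI) (seq 0 J)); split; [|split; [|split]].
  - apply NoDup_map_NoDup_ForallPairs; [|apply seq_NoDup].
    intros a b _ _ e; apply Rmult_eq_reg_r, INR_eq in e; [nia|lra].
  - now rewrite length_map, length_seq.
  - intros x; rewrite in_map_iff; split.
    + intros (j & <- & hj); apply in_seq in hj.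
      assert (INR (S j * q) * PI <= r).
      { rewrite mult_INR; apply (Rle_trans _ (INR J * (INR q * PI))); [|exact hJ1].
        rewrite Rmult_assoc; apply Rmult_le_compat_r; [nra|apply le_INR; lia]. }
      assert (htriple : exists n, (0 < n)%nat /\ INR (S j * q) * PI = INR n * PI /\
                                  int_multiple gamma n).
      { exists (S j * q)%nat; split; [nia|split; [reflexivity|]].
        apply int_multiple_iff_divides; exists (S j); reflexivity. }
      apply (triple_ITE_iff gamma _ hg) in htriple; destruct htriple as (hx & hF & hs).
      repeat split; assumption.
    + intros ((hx1 & hx2) & hF & hs).
      destruct (proj1 (triple_ITE_iff gamma x hg) (conj hx1 (conj hF hs))) as (n & hn & -> & hint).
      apply int_multiple_iff_divides in hint; destruct hint as [[|j] ->]; [lia|].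
      exists j; split; [reflexivity|apply in_seq; split; [lia|]].
      assert (hjJ : INR (S j) < INR J + 1).
      { apply (Rmult_lt_reg_r (INR q * PI)); [nra|]; rewrite mult_INR in hx2; nra. }
      rewrite <- S_INR in hjJ; apply INR_lt in hjJ; lia.
  - replace (2 / INR q * r / PI) with (2 * (r / (INR q * PI))) by (field; lra).
    assert (INR J <= r / (INR q * PI) < INR J + 1).
    { split; [apply (Rmult_le_reg_r (INR q * PI))|apply (Rmult_lt_reg_r (INR q * PI))];
        [nra| |nra|]; unfold Rdiv; rewrite Rmult_assoc, Rinv_l, Rmult_1_r by nra; lra. }
    apply Rabs_le; lra.
Qed.

Lemma integral_iff_unit_fraction p : gamma * INR q = IZR p ->
  ((exists m : Z, gamma = IZR m) \/ (exists m : Z, / gamma = IZR m)) <-> (q = 1%nat \/ p = 1%Z).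
Proof.
  intros hp; split.
  - intros [[m hm]|[m hm]].
    + left; enough (q <= 1)%nat by lia.
      apply hq_least; [lia|]; exists m; rewrite hm; simpl; ring.
    + right; assert (hm0 : 0 < IZR m) by (rewrite <- hm; apply Rinv_0_lt_compat, hg).
      assert (E : INR (Z.to_nat m) = IZR m)
        by (rewrite INR_IZR_INZ, Z2Nat.id; [reflexivity|apply le_IZR; lra]).
      assert (hqm : (q <= Z.to_nat m)%nat).
      { apply hq_least; [apply INR_lt; simpl; lra|].
        exists 1%Z; rewrite E, <- hm; field; lra. }
      apply le_INR in hqm; rewrite E in hqm.
      assert (hp0 : 0 < IZR p)
        by (rewrite <- hp; apply Rmult_lt_0_compat; [exact hg|apply lt_0_INR, hq]).
      assert (hp1 : IZR p <= 1).
      { rewrite <- hp, <- (Rinv_r gamma) by lra; rewrite hm.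
        apply Rmult_le_compat_l; lra. }
      apply lt_IZR in hp0; apply le_IZR in hp1; lia.
  - intros [-> | ->].
    + left; exists p; rewrite <- hp; simpl; ring.
    + right; exists (Z.of_nat q); rewrite <- INR_IZR_INZ.
      apply (Rmult_eq_reg_l gamma); [|lra]; rewrite Rinv_r by lra; simpl in hp; lra.
Qed.

(* For gamma = p / q the density of ITEs is c = |gamma - 1| + 2 / q; since
   1 + gamma - |gamma - 1| = 2 min(1, gamma), the gap 1 + gamma - c equals
   2 (min(q, p) - 1) / q. *)
Lemma rational_constant :
  Rabs (gamma - 1) + 2 / INR q <= 1 + gamma /\
  (Rabs (gamma - 1) + 2 / INR q = 1 + gamma <->
   ((exists m : Z, gamma = IZR m) \/ (exists m : Z, / gamma = IZR m))).
Proof.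
  destruct hq_int as [p hp].
  assert (hq1 : 1 <= INR q) by (apply (le_INR 1), hq).
  assert (hp1 : 1 <= IZR p).
  { assert (0 < p)%Z by (apply lt_IZR; rewrite <- hp; apply Rmult_lt_0_compat; lra).
    apply IZR_le; lia. }
  assert (hgap : 1 + gamma - (Rabs (gamma - 1) + 2 / INR q)
                 = 2 * (Rmin (INR q) (IZR p) - 1) / INR q).
  { replace (1 + gamma - (Rabs (gamma - 1) + 2 / INR q))
      with (1 + gamma - Rabs (gamma - 1) - 2 / INR q) by ring.
    rewrite one_plus_sub_abs, <- hp; destruct (Rle_dec 1 gamma).
    - rewrite Rmin_left, Rmin_left by nra; field; lra.
    - rewrite Rmin_right, Rmin_right by nra; field; lra. }
  assert (hmin : 1 <= Rmin (INR q) (IZR p)) by (apply Rmin_glb; lra).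
  assert (0 <= 2 * (Rmin (INR q) (IZR p) - 1) / INR q)
    by (apply Rdiv_le_0_compat; lra).
  split; [lra|]; rewrite (integral_iff_unit_fraction p hp); split.
  - intros heq; assert (hm1 : Rmin (INR q) (IZR p) = 1).
    { assert (2 * (Rmin (INR q) (IZR p) - 1) / INR q = 0) as h0 by lra.
      apply Rmult_integral in h0; destruct h0 as [h0|h0]; [lra|].
      apply Rinv_neq_0_compat in h0; lra. }
    unfold Rmin in hm1; destruct (Rle_dec (INR q) (IZR p)).
    + left; apply INR_eq; simpl; exact hm1.
    + right; apply eq_IZR; exact hm1.
  - intros hqp; assert (Rmin (INR q) (IZR p) = 1).
    { destruct hqp as [->| ->]; simpl; [apply Rmin_left|apply Rmin_right]; lra. }
    rewrite H0 in hgap; lra.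
Qed.

End RationalGamma.

Lemma irrational_constant gamma : 0 < gamma ->
  ~ (exists n, (0 < n)%nat /\ int_multiple gamma n) ->
  Rabs (gamma - 1) + 0 <= 1 + gamma /\
  (Rabs (gamma - 1) + 0 = 1 + gamma <->
   ((exists m : Z, gamma = IZR m) \/ (exists m : Z, / gamma = IZR m))).
Proof.
  intros hg hirr; assert (Rabs (gamma - 1) < 1 + gamma) by (apply Rabs_def1; lra).
  split; [lra|split; [lra|]].
  intros [[m hm]|[m hm]]; exfalso; apply hirr.
  - exists 1%nat; split; [lia|]; exists m; rewrite hm; simpl; ring.
  - assert (hm0 : 0 < IZR m) by (rewrite <- hm; apply Rinv_0_lt_compat, hg).
    assert (E : INR (Z.to_nat m) = IZR m)
      by (rewrite INR_IZR_INZ, Z2Nat.id; [reflexivity|apply le_IZR; lra]).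
    exists (Z.to_nat m); split; [apply INR_lt; rewrite E; simpl; lra|].
    exists 1%Z; rewrite E, <- hm; field; lra.
Qed.

(* The triple ITEs contribute 2 J = c0 r / PI + O(1), with c0 = 2 / q if
   gamma = p / q in lowest terms and c0 = 0 if gamma is irrational. *)
Lemma triple_ITE_asymptotics gamma : 0 < gamma ->
  exists c0,
    Rabs (gamma - 1) + c0 <= 1 + gamma /\
    (Rabs (gamma - 1) + c0 = 1 + gamma <->
     ((exists m : Z, gamma = IZR m) \/ (exists m : Z, / gamma = IZR m))) /\
    forall r, 0 <= r -> exists J s, NoDup s /\ length s = J /\
      (forall x, In x s <-> (0 < x <= r /\ F_ITE gamma x = 0 /\ sin x = 0)) /\
      Rabs (2 * INR J - c0 * r / PI) <= 2.
Proof.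
  intros hg; destruct (classic (exists n, (0 < n)%nat /\ int_multiple gamma n)) as [hrat|hirr].
  - destruct (least_nat _ hrat) as (q & [hq hq_int] & hleast).
    assert (hq_least : forall k, (0 < k)%nat -> int_multiple gamma k -> (q <= k)%nat)
      by (intros k hk hint; apply hleast; split; assumption).
    exists (2 / INR q); split; [|split]; [apply (rational_constant gamma q hg hq hq_int hq_least)..|].
    intros r hr; apply triple_ITE_count_rational; assumption.
  - exists 0; split; [|split]; [apply (irrational_constant gamma hg hirr)..|].
    intros r hr; exists 0%nat, nil; split; [constructor|split; [reflexivity|split]].
    + intros x; split; [intros []|intros ((hx & _) & hF & hs)].
      apply hirr; destruct (proj1 (triple_ITE_iff gamma x hg) (conj hx (conj hF hs)))
        as (n & hn & _ & hint); exists n; split; assumption.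
    + simpl; replace (2 * 0 - 0 * r / PI) with 0 by (unfold Rdiv; ring).
      rewrite Rabs_R0; lra.
Qed.

Theorem mainTheorem7 (gamma : R) (hpos : 0 < gamma) (hne : gamma <> 1) :
  exists c : R,
    c <= 1 + gamma /\
    (c = 1 + gamma <->
       ((exists m : Z, gamma = IZR m) \/ (exists m : Z, / gamma = IZR m))) /\
    (exists C r0 : R, forall r : R, r0 <= r ->
       exists n : nat, ITE_count gamma r n /\
                       Rabs (INR n - c * r / PI) <= C).
Proof.
  destruct (triple_ITE_asymptotics gamma hpos) as (c0 & hle & hiff & htriple).
  exists (Rabs (gamma - 1) + c0); split; [exact hle|split; [exact hiff|]].
  exists 4, 0; intros r hr.
  destruct (distinct_ITE_count gamma r hpos hne hr) as (K & l & hl & hK & hin & hKr).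
  destruct (htriple r hr) as (J & s & hs & hJ & hins & hJr).
  exists (K + 2 * J)%nat; split.
  - rewrite <- hK, <- hJ; apply ITE_count_from_lists; assumption.
  - pose proof PI_RGT_0.
    replace (INR (K + 2 * J) - (Rabs (gamma - 1) + c0) * r / PI)
      with ((INR K - Rabs (gamma - 1) * r / PI) + (2 * INR J - c0 * r / PI))
      by (rewrite plus_INR, mult_INR; simpl; field; lra).
    eapply Rle_trans; [apply Rabs_triang|lra].
Qed.
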